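(* For every signed permutation $\pi\in\mathfrak{B}_n$, \[\mathfrak{d}_B(\pi)=\sum_{\substack{E\subseteq\{0,1,\dots,n-1\}\\ \operatorname{Pe}_B(\pi)\subseteq E\cup(E+1)\\ \pi(1)<0\ \Rightarrow\ 0\in E}}2^{|E|}N_E,\] where $E+1=\{e+1: e\in E\}$.
   Context: $\mathfrak{B}_n$ is the group of signed permutations (bijections $\pi$ of $\{-n,\dots,n\}$ with $\pi(-i)=-\pi(i)$), written as words, with $\pi(0)=0$. $\operatorname{Pe}_B(\pi)$ is the set of $i\in\{1,\dots,n-1\}$ with $\pi(i-1)<\pi(i)>\pi(i+1)$. Work in formal power series in commuting variables $z_0,z_1,z_2,\dots$. For $E=\{e_1<\dots<e_m\}\subseteq\{0,\dots,n-1\}$ put $e_{m+1}=n$ and $N_E=\sum_{0<i_1<\dots<i_m}z_0^{e_1}\prod_{r=1}^m z_{i_r}^{e_{r+1}-e_r}$ (so $N_\emptyset=z_0^n$). Let $Z$ be the totally ordered set $0<\bar1<1<\bar2<2<\cdots$, with $0$ and unbarred $j$ ''plus-type'' and barred $\bar j$ ''minus-type'', and $|0|=0$, $|\bar j|=|j|=j$. Define $\mathfrak{d}_B(\pi)=\sum\prod_{s=1}^n z_{|a_s|}$, the sum over all sequences $(a_1,\dots,a_n)\in Z^n$ such that, with $a_0=0$, $a_0\le a_1\le\dots\le a_n$ and for each $s\in\{0,\dots,n-1\}$: if $\pi(s)<\pi(s+1)$ then $a_s<a_{s+1}$ or ($a_s=a_{s+1}$ is plus-type); if $\pi(s)>\pi(s+1)$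 then $a_s<a_{s+1}$ or ($a_s=a_{s+1}$ is minus-type). *)

From mathcomp Require Import all_boot all_order all_algebra.
Set Implicit Arguments. Unset Strict Implicit. Unset Printing Implicit Defensive.
Import Order.TTheory GRing.Theory Num.Theory.
Local Open Scope ring_scope.

(* Formal power series in commuting variables z_0, z_1, z_2, ...          *)
(* A monomial is a finite multiset of variable indices, represented by a  *)
(* list [mu] (z_{mu_1} * ... * z_{mu_k}); lists equal up to permutation   *)
(* represent the same monomial.  A power series (with nat coefficients)   *)
(* is given by its coefficient function [seq nat -> nat]; all series     *)
(* below are perm_eq-invariant by construction.                           *)
(* An object contributing to the coefficient of mu only uses indices      *)
(* <= max mu, so counting objects with indices < mono_bound mu is exact.  *)
Definition series := seq nat -> nat.

Definition mono_bound (mu : seq nat) : nat := (foldr maxn 0 mu).+1.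

(* (values outside {-n..n} are irrelevant).                                *)
Definition signed_perm (n : nat) (pi : int -> int) : Prop :=
  [/\ forall i : int, - (n%:Z) <= i <= n%:Z -> - (n%:Z) <= pi i <= n%:Z,
      forall i j : int, - (n%:Z) <= i <= n%:Z -> - (n%:Z) <= j <= n%:Z ->
        pi i = pi j -> i = j
    & forall i : int, - (n%:Z) <= i <= n%:Z -> pi (- i) = - pi i].

Definition PeB (n : nat) (pi : int -> int) (i : nat) : bool :=
  [&& (0 < i)%N, (i < n)%N, pi (Posz i.-1) < pi (Posz i) & pi (Posz i.+1) < pi (Posz i)].

(* The totally ordered set Z = 0 < -1bar < 1 < -2bar < 2 < ... is encoded  *)
(* in nat: 0 |-> 0, bar j |-> 2j-1, j |-> 2j (order preserving).          *)
(* |c| = uphalf c ; c is plus-type iff c is even, minus-type iff c odd.   *)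
Definition absZ (c : nat) : nat := uphalf c.
Definition plus_type (c : nat) : bool := ~~ odd c.
Definition minus_type (c : nat) : bool := odd c.

Definition aseq (a : seq nat) (s : nat) : nat :=
  if s is s'.+1 then nth 0%N a s' else 0%N.

Definition dB_ok (n : nat) (pi : int -> int) (a : seq nat) : bool :=
  [forall s : 'I_n,
     let x := aseq a s in let y := aseq a s.+1 in
     [&& (x <= y)%N,
         (pi (Posz s) < pi (Posz s.+1)) ==> ((x < y)%N || ((x == y) && plus_type y))
       & (pi (Posz s.+1) < pi (Posz s)) ==> ((x < y)%N || ((x == y) && minus_type y))]].

Definition dB (n : nat) (pi : int -> int) : series := fun mu =>
  #|[pred a : n.-tuple 'I_(2 * mono_bound mu) |
      dB_ok n pi [seq val c | c <- a] &&
      perm_eq [seq absZ (val c) | c <- a] mu]|.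

(* N_E.  For E = {e_1 < ... < e_m} (es = sorted list), e_{m+1} = n, and   *)
(* indices is = (i_1, ..., i_m), the monomial                              *)
(*   z_0^{e_1} prod_r z_{i_r}^{e_{r+1} - e_r}.                            *)
Definition NE_mono (n : nat) (es ix : seq nat) : seq nat :=
  nseq (head n es) 0%N ++
  flatten [seq nseq (p.1.2 - p.1.1)%N p.2 | p <- zip (zip es (rcons (behead es) n)) ix].

Definition Elist (n : nat) (E : {set 'I_n}) : seq nat :=
  sort leq [seq val e | e in E].

Definition NE (n : nat) (E : {set 'I_n}) : series := fun mu =>
  #|[pred ix : #|E|.-tuple 'I_(mono_bound mu) |
      sorted ltn (0%N :: [seq val i | i <- ix]) &&
      perm_eq (NE_mono n (Elist E) [seq val i | i <- ix]) mu]|.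

Definition admissible (n : nat) (pi : int -> int) (E : {set 'I_n}) : bool :=
  [forall i : 'I_n, PeB n pi i ==>
      ((i \in E) || [exists e in E, (val e).+1 == val i])]
  && (((0 < n)%N && (pi 1 < 0)) ==> [exists e in E, val e == 0%N]).

Definition rhs (n : nat) (pi : int -> int) : series := fun mu =>
  (\sum_(E : {set 'I_n} | @admissible n pi E) 2 ^ #|E| * NE E mu)%N.

(* Group the words a counted by d_B(pi) by their absolute value b = |a|, a
   weakly increasing word over nat with b_0 = 0.  If E is the set of strict
   ascents of b, the words b with ascent set E are exactly the monomials of N_E
   (a word is a staircase: it is determined by E and by the values it jumps to).
   It remains to count the lifts a of a fixed b, letter by letter.  A jump
   b_s < b_(s+1) leaves the type of a_(s+1) free; on a plateau b_s = b_(s+1)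
   the type can only switch from minus to plus, staying plus needs an ascent of
   pi and staying minus a descent.  Hence a plateau of positive value has two
   type patterns if pi has no peak strictly inside it and none otherwise, and
   the plateau of value 0 (all plus) has one iff pi increases on it.  Along b
   this is a two-state transfer-matrix induction, whose total is 2^|E| if every
   peak lies in E ∪ (E + 1) and pi(1) < 0 forces 0 ∈ E, and 0 otherwise. *)

From mathcomp Require Import all_boot all_order all_algebra.
From mathcomp Require Import zify.
Set Implicit Arguments. Unset Strict Implicit. Unset Printing Implicit Defensive.
Import Order.TTheory.

Lemma count_sum (T : Type) (P : pred T) (s : seq T) :
  count P s = \sum_(x <- s) (P x : nat).
Proof. by rewrite -sum1_count big_mkcond; apply: eq_bigr => x _; case: (P x). Qed.

Lemma sum_pick (T : eqType) (s : seq T) (z : T) (F : T -> nat) :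
  uniq s -> \sum_(x <- s) (x == z) * F x = (z \in s) * F z.
Proof.
move=> uniq_s; elim: s uniq_s => [|x s IHs] /=; first by rewrite big_nil.
case/andP=> s'x /IHs; rewrite big_cons inE => ->.
by case: eqVneq => [<-|_]; rewrite ?(negPf s'x) /= ?mul0n ?addn0.
Qed.

Lemma prod_nat_bool (I : finType) (P : pred I) :
  \prod_(i : I) (P i : nat) = [forall i, P i].
Proof.
case: (pickP (predC P)) => [i /negPf Pi | allP].
  by rewrite (bigD1 i) //= Pi mul0n; case: forallP => // /(_ i); rewrite Pi.
rewrite big1 => [|i _]; last by rewrite (negbFE (allP i)).
by case: forallP => // -[i]; exact: negbFE (allP i).
Qed.

Lemma count_bij (T1 T2 : eqType) (f : T1 -> T2) (s1 : seq T1) (s2 : seq T2)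
    (P : pred T1) (Q : pred T2) :
  uniq s1 -> uniq s2 ->
  {in filter P s1 &, injective f} ->
  {in filter P s1, forall x, f x \in filter Q s2} ->
  {in filter Q s2, forall y, exists2 x, x \in filter P s1 & f x = y} ->
  count P s1 = count Q s2.
Proof.
move=> uniq_s1 uniq_s2 f_inj f_into f_onto.
rewrite -!size_filter -(size_map f); apply/perm_size/uniq_perm.
- by rewrite map_inj_in_uniq ?filter_uniq.
- exact: filter_uniq.
move=> y; apply/mapP/idP => [[x /f_into ? ->] // | /f_onto[x]]; by exists x.
Qed.

Fixpoint bounded_seqs (k K : nat) : seq (seq nat) :=
  if k is k'.+1 then [seq rcons s x | s <- bounded_seqs k' K, x <- iota 0 K]
  else [:: [::]].

Lemma mem_bounded_seqs k K s :
  (s \in bounded_seqs k K) = (size s == k) && all (fun x => x < K) s.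
Proof.
elim: k s => [|k IHk] s /=; first by case: s.
apply/allpairsP/idP => [[[s' x] [/= + + ->]] | ].
  by rewrite IHk mem_iota size_rcons all_rcons eqSS => /andP[-> ->] /andP[_ ->].
case/lastP: s => // s x; rewrite size_rcons all_rcons eqSS => /andP[s_k /andP[x_K s_K]].
by exists (s, x); rewrite IHk s_k s_K mem_iota.
Qed.

Lemma uniq_bounded_seqs k K : uniq (bounded_seqs k K).
Proof.
elim: k => //= k IHk; rewrite allpairs_uniq ?iota_uniq //.
by move=> [s x] [s' x'] _ _ /= /rcons_inj[-> ->].
Qed.

Lemma size_bounded_seqs k K : size (bounded_seqs k K) = K ^ k.
Proof. by elim: k => //= k IHk; rewrite size_allpairs IHk size_iota expnSr. Qed.

Lemma card_tuple_bounded_seqs k K (P : pred (seq nat)) :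
  #|[pred t : k.-tuple 'I_K | P [seq val i | i <- t]]| = count P (bounded_seqs k K).
Proof.
pose vals (t : k.-tuple 'I_K) := [seq val i | i <- t].
have vals_inj : injective vals.
  by move=> t1 t2 /(inj_map val_inj) eq_t; apply: val_inj.
have vals_enum : perm_eq (map vals (enum {: k.-tuple 'I_K})) (bounded_seqs k K).
  have uniq_vals : uniq (map vals (enum {: k.-tuple 'I_K})).
    by rewrite map_inj_uniq ?enum_uniq.
  apply: uniq_perm; rewrite ?uniq_bounded_seqs //.
  apply: (uniq_min_size uniq_vals _ _).2 => [s /mapP[t _ ->] | ]; last first.
    by rewrite size_map -cardE card_tuple card_ord size_bounded_seqs.
  rewrite mem_bounded_seqs size_map size_tuple eqxx /=.
  by apply/allP => _ /mapP[i _ ->]; exact: ltn_ord.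
rewrite -(permP vals_enum) count_map cardE -size_filter /enum_mem -filter_predI.
by congr size; apply: eq_filter => t /=; rewrite andbT.
Qed.

Lemma mono_bound_gt (mu : seq nat) x : x \in mu -> x < mono_bound mu.
Proof.
rewrite /mono_bound ltnS; elim: mu => //= y mu IHmu.
by rewrite inE leq_max => /predU1P[-> | /IHmu ->]; rewrite ?leqnn ?orbT.
Qed.

(** * Staircase words and the series N_E *)

Definition stair_blocks (n : nat) (es ix : seq nat) : seq nat :=
  flatten [seq nseq (p.1.2 - p.1.1) p.2 | p <- zip (zip es (rcons (behead es) n)) ix].

(* [staircase v n [:: e_1; ...; e_m] [:: i_1; ...; i_m]] is the word
   v^e_1 i_1^(e_2 - e_1) ... i_m^(n - e_m); for v = 0 it is the monomial of N_E. *)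
Definition staircase (v n : nat) (es ix : seq nat) : seq nat :=
  nseq (head n es) v ++ stair_blocks n es ix.

Lemma NE_monoE n es ix : NE_mono n es ix = staircase 0 n es ix.
Proof. by []. Qed.

Lemma stair_blocks_nil n es : stair_blocks n es [::] = [::].
Proof. by rewrite /stair_blocks; case: (zip es _). Qed.

Lemma stair_blocks_cons n e es x ix :
  stair_blocks n (e :: es) (x :: ix) = nseq (head n es - e) x ++ stair_blocks n es ix.
Proof. by case: es. Qed.

Lemma stair_blocks_shift n es ix : stair_blocks n.+1 (map succn es) ix = stair_blocks n es ix.
Proof.
elim: es ix => [|e es IHes] [|x ix] //; rewrite ?stair_blocks_nil //.
by rewrite /= !stair_blocks_cons IHes; case: es {IHes}.
Qed.

Lemma staircase_shift v n es ix :
  staircase v n.+1 (map succn es) ix = v :: staircase v n es ix.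
Proof. by rewrite /staircase stair_blocks_shift; case: es. Qed.

Lemma staircase_step v n es x ix :
  staircase v n.+1 (0 :: map succn es) (x :: ix) = x :: staircase x n es ix.
Proof. by rewrite /staircase /= stair_blocks_cons stair_blocks_shift subn0; case: es. Qed.

Lemma iota0S n : iota 0 n.+1 = 0 :: map succn (iota 0 n).
Proof. by rewrite /= -[1]addn0 iotaDl. Qed.

Definition aseq_from (v : nat) (b : seq nat) (s : nat) : nat :=
  if s is s'.+1 then nth 0 b s' else v.

Fixpoint stair_code (v : nat) (b : seq nat) : seq nat * seq nat :=
  if b is x :: b' then
    let p := stair_code x b' in
    if v < x then (0 :: map succn p.1, x :: p.2) else (map succn p.1, p.2)
  else ([::], [::]).

Lemma stair_codeK v b :
  path leq v b -> staircase v (size b) (stair_code v b).1 (stair_code v b).2 = b.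
Proof.
elim: b v => [|x b IHb] v //= /andP[le_vx /(IHb x) IH].
case: ltnP => [_ | le_xv]; first by rewrite staircase_step IH.
have eq_xv : x = v by apply/eqP; rewrite eqn_leq le_xv.
by subst x; rewrite staircase_shift IH.
Qed.

Lemma stair_code_ascents v b :
  (stair_code v b).1 = [seq s <- iota 0 (size b) | aseq_from v b s < aseq_from v b s.+1].
Proof.
elim: b v => [|x b IHb] v //.
rewrite [size _]/= iota0S /= filter_map (IHb x).
rewrite (@eq_filter _ _ (fun s => aseq_from x b s < aseq_from x b s.+1)); last by case.
by case: ltnP.
Qed.

Lemma size_stair_code v b : size (stair_code v b).2 = size (stair_code v b).1.
Proof. by elim: b v => [|x b IHb] v //=; case: ltnP; rewrite /= size_map IHb. Qed.

Lemma stair_code_path v b : path leq v b -> path ltn v (stair_code v b).2.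
Proof.
elim: b v => [|x b IHb] v //= /andP[le_vx /(IHb x) IH].
case: ltnP => [/= -> // | le_xv].
by have <- : x = v by apply/eqP; rewrite eqn_leq le_xv.
Qed.

Lemma stair_code_bounded K v b :
  all (fun y => y < K) b -> all (fun y => y < K) (stair_code v b).2.
Proof.
elim: b v => [|x b IHb] v //= /andP[x_K /(IHb x) IH].
by case: ltnP => _ /=; rewrite ?x_K.
Qed.

Lemma staircase_spec n v (P : pred nat) ix :
    size ix = count P (iota 0 n) -> path ltn v ix ->
  [/\ size (staircase v n [seq s <- iota 0 n | P s] ix) = n,
      path leq v (staircase v n [seq s <- iota 0 n | P s] ix) &
      stair_code v (staircase v n [seq s <- iota 0 n | P s] ix) = ([seq s <- iota 0 n | P s], ix)].
Proof.
elim: n v P ix => [|n IHn] v P ix; first by case: ix.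
rewrite iota0S /= count_map filter_map.
case: (P 0); rewrite /= ?add0n.
  case: ix => [|x ix] //= [size_ix] /andP[lt_vx path_ix].
  rewrite staircase_step /=.
  have [-> -> ->] := IHn x (preim succn P) ix size_ix path_ix.
  by rewrite lt_vx (ltnW lt_vx).
move=> size_ix path_ix; rewrite staircase_shift /=.
by have [-> -> ->] := IHn v (preim succn P) ix size_ix path_ix; rewrite leqnn ltnn.
Qed.

Definition ascent_set (n : nat) (b : seq nat) : {set 'I_n} :=
  [set i : 'I_n | aseq b i < aseq b i.+1].

Section Elist.
Variable n : nat.
Implicit Types E : {set 'I_n}.

Lemma mem_Elist E (i : 'I_n) : (val i \in Elist E) = (i \in E).
Proof. by rewrite /Elist mem_sort (mem_map val_inj) mem_enum. Qed.

Lemma Elist_inj : injective (@Elist n).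
Proof. by move=> E1 E2 eq_E; apply/setP => i; rewrite -!mem_Elist eq_E. Qed.

Lemma size_Elist E : size (Elist E) = #|E|.
Proof. by rewrite /Elist size_sort size_map -cardE. Qed.

Lemma Elist_filter E : Elist E = [seq s <- iota 0 n | s \in Elist E].
Proof.
apply: (irr_sorted_eq ltn_trans ltnn).
- rewrite ltn_sorted_uniq_leq sort_uniq (map_inj_uniq val_inj) enum_uniq.
  exact: (sort_sorted leq_total).
- exact: (sorted_filter ltn_trans _ (iota_ltn_sorted 0 n)).
move=> x; rewrite mem_filter mem_iota andbC; case: (boolP (x \in _)) => [|_]; last by rewrite andbF.
by rewrite /Elist mem_sort => /mapP[i _ ->]; rewrite add0n ltn_ord.
Qed.

Lemma Elist_ascent_set b :
  Elist (ascent_set n b) = [seq s <- iota 0 n | aseq b s < aseq b s.+1].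
Proof.
rewrite Elist_filter; apply: eq_in_filter => s; rewrite mem_iota => /= lt_sn.
by rewrite -[s]/(val (Ordinal lt_sn)) mem_Elist inE.
Qed.

Lemma Elist_stair_code b : size b = n -> Elist (ascent_set n b) = (stair_code 0 b).1.
Proof. by move=> size_b; rewrite Elist_ascent_set stair_code_ascents size_b. Qed.

End Elist.

Lemma NE_as_count n (E : {set 'I_n}) mu :
  NE E mu = count [pred b | path leq 0 b && (ascent_set n b == E) && perm_eq b mu]
                  (bounded_seqs n (mono_bound mu)).
Proof.
rewrite /NE (card_tuple_bounded_seqs _ _
  [pred ix | sorted ltn (0 :: ix) && perm_eq (NE_mono n (Elist E) ix) mu]).
have E_filter := Elist_filter E; set es := Elist E in E_filter *.
have count_es : count (mem es) (iota 0 n) = #|E| by rewrite -size_filter -E_filter size_Elist.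
have staircase_es ix : ix \in bounded_seqs #|E| (mono_bound mu) -> sorted ltn (0 :: ix) ->
    [/\ size (staircase 0 n es ix) = n, path leq 0 (staircase 0 n es ix)
      & stair_code 0 (staircase 0 n es ix) = (es, ix)].
  rewrite mem_bounded_seqs -count_es => /andP[/eqP size_ix _] path_ix.
  by rewrite [in staircase _ _ es]E_filter [in (es, _)]E_filter; exact: staircase_spec.
apply: (count_bij (f := staircase 0 n es)); rewrite ?uniq_bounded_seqs //.
- move=> ix iy; rewrite !mem_filter /= => /andP[/andP[sorted_x _] bounded_x].
  move=> /andP[/andP[sorted_y _] bounded_y] eq_b.
  have [_ _ code_x] := staircase_es ix bounded_x sorted_x.
  have [_ _ code_y] := staircase_es iy bounded_y sorted_y.
  by move: code_x; rewrite eq_b code_y => -[].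
- move=> ix; rewrite !mem_filter /= => /andP[/andP[sorted_ix perm_b] bounded_ix].
  have [size_b path_b code_b] := staircase_es ix bounded_ix sorted_ix.
  rewrite -NE_monoE in perm_b *.
  rewrite mem_bounded_seqs size_b eqxx path_b perm_b andbT /=; apply/andP; split.
    by apply/eqP; apply: Elist_inj; rewrite (Elist_stair_code size_b) code_b.
  apply/allP => y; rewrite (perm_mem perm_b); exact: mono_bound_gt.
move=> b; rewrite mem_filter mem_bounded_seqs /=.
move=> /andP[/andP[/andP[path_b /eqP ascents_b] perm_b] /andP[/eqP size_b b_bounded]].
have es_code : es = (stair_code 0 b).1 by rewrite /es -ascents_b Elist_stair_code.
exists (stair_code 0 b).2; last by rewrite es_code -{1}size_b stair_codeK.
rewrite mem_filter mem_bounded_seqs size_stair_code -es_code size_Elist eqxx /=.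
by rewrite stair_code_bounded // stair_code_path // NE_monoE es_code -{1}size_b stair_codeK ?perm_b.
Qed.

Lemma rhs_as_sum n pi mu : rhs n pi mu =
  \sum_(b <- bounded_seqs n (mono_bound mu))
     path leq 0 b * 2 ^ #|ascent_set n b| * admissible pi (ascent_set n b) * perm_eq b mu.
Proof.
rewrite /rhs (eq_bigr (fun E : {set 'I_n} => \sum_(b <- bounded_seqs n (mono_bound mu))
    2 ^ #|E| * (path leq 0 b && (ascent_set n b == E) && perm_eq b mu))); last first.
  by move=> E _; rewrite NE_as_count count_sum big_distrr.
rewrite exchange_big /=; apply: eq_bigr => b _.
rewrite big_mkcond (bigD1 (ascent_set n b)) //= eqxx big1 ?addn0 => [|E /negPf neq_E]; last first.
  by rewrite eq_sym neq_E andbF muln0 if_same.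
rewrite andbT; case: (admissible _ _); case: (path _ _ _); case: (perm_eq _ _);
  by rewrite /= ?muln0 ?muln1 ?mul1n.
Qed.

(** * Lifting a word over nat to Z *)

Definition lift_step (pi : int -> int) (c x s : nat) : bool :=
  [&& c <= x, (pi s < pi s.+1)%R ==> ((c < x) || ((c == x) && plus_type x))
    & (pi s.+1 < pi s)%R ==> ((c < x) || ((c == x) && minus_type x))].

Definition lift_ok (pi : int -> int) (k : nat) (a : seq nat) : bool :=
  all (fun s => lift_step pi (aseq a s) (aseq a s.+1) s) (iota 0 k).

Lemma dB_okE n pi a : dB_ok n pi a = lift_ok pi n a.
Proof.
apply/forallP/allP => [ok_a s | ok_a s]; last by apply: ok_a; rewrite mem_iota ltn_ord.
by rewrite mem_iota => lt_sn; exact: (ok_a (Ordinal lt_sn)).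
Qed.

Lemma aseq_rcons l x s : s <= size l -> aseq (rcons l x) s = aseq l s.
Proof. by case: s => //= s lt_sl; rewrite nth_rcons lt_sl. Qed.

Lemma aseq_rcons_last l x : aseq (rcons l x) (size l).+1 = x.
Proof. by rewrite /= nth_rcons ltnn eqxx. Qed.

Lemma aseq_map (f : nat -> nat) l s : f 0 = 0 -> aseq (map f l) s = f (aseq l s).
Proof. by case: s => //= s f0; elim: l s => [|y l IHl] [|s] //=. Qed.

Lemma lift_ok_rcons pi l x : lift_ok pi (size l).+1 (rcons l x) =
  lift_ok pi (size l) l && lift_step pi (aseq l (size l)) x (size l).
Proof.
rewrite /lift_ok -addn1 iotaD all_cat add0n /= andbT nth_rcons ltnn eqxx aseq_rcons //.
congr andb; apply: eq_in_all => s; rewrite mem_iota /= => lt_sl.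
by rewrite aseq_rcons ?(ltnW lt_sl) // nth_rcons lt_sl.
Qed.

(* The element of Z of absolute value y, of minus type iff [minus]. *)
Definition letter (minus : bool) (y : nat) : nat := if minus then y.*2.-1 else y.*2.

Lemma letter_odd_absZ c : c = letter (odd c) (absZ c).
Proof.
by rewrite /letter /absZ uphalf_half; have := odd_double_half c; case: (odd c) => /=; lia.
Qed.

Lemma letterK p y : p ==> (0 < y) -> absZ (letter p y) = y /\ odd (letter p y) = p.
Proof.
rewrite /absZ /letter; case: p => [/= | _]; last by rewrite uphalf_double odd_double.
by case: y => // y _; rewrite doubleS /= doubleK odd_double.
Qed.

Lemma absZ_odd_letter x y p :
  (absZ x == y) && (odd x == p) = (p ==> (0 < y)) && (x == letter p y).
Proof.
apply/andP/andP => [[/eqP <- /eqP <-] | [y_pos /eqP ->]]; last first.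
  by have [-> ->] := letterK y_pos; split.
split; last by rewrite {1}[x]letter_odd_absZ.
rewrite /absZ uphalf_half; case: (odd x) => //=.
Qed.

Definition nlifts (pi : int -> int) (K : nat) (b : seq nat) (minus : bool) : nat :=
  \sum_(a <- bounded_seqs (size b) K)
     (lift_ok pi (size b) a && (map absZ a == b) && (odd (aseq a (size b)) == minus)).

Lemma sum_letters K y p (P : pred nat) : letter p y < K ->
  \sum_(x <- iota 0 K) (P x && ((absZ x == y) && (odd x == p))) = (p ==> (0 < y)) * P (letter p y).
Proof.
move=> lt_yK; rewrite (eq_bigr (fun x => (x == letter p y) * ((p ==> (0 < y)) && P x))).
  by rewrite sum_pick ?iota_uniq // mem_iota add0n leq0n lt_yK mul1n mulnb.
by move=> x _; rewrite absZ_odd_letter mulnb; case: (P x) (x == _) (p ==> _) => [] [] [].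
Qed.

Lemma nlifts_rcons pi K b y p : y.*2 < K ->
  nlifts pi K (rcons b y) p = (p ==> (0 < y)) *
   (nlifts pi K b false * lift_step pi (letter false (aseq b (size b))) (letter p y) (size b)
    + nlifts pi K b true * lift_step pi (letter true (aseq b (size b))) (letter p y) (size b)).
Proof.
move=> lt_yK; rewrite /nlifts size_rcons /= big_allpairs_dep /=.
rewrite !big_distrl -big_split big_distrr /=; apply: eq_big_seq => l.
rewrite mem_bounded_seqs => /andP[/eqP size_l _].
set lifts_b := lift_ok pi (size b) l && (map absZ l == b); set a_k := aseq l (size b).
under eq_bigr => x _.
  rewrite -{1 2}size_l lift_ok_rcons map_rcons eqseq_rcons ?size_map // nth_rcons size_l ltnn eqxx.
  rewrite (_ : _ && _ =
    lifts_b && (lift_step pi a_k x (size b) && ((absZ x == y) && (odd x == p)))).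
    by rewrite -mulnb; over.
  rewrite /lifts_b /a_k; move: (lift_step _ _ _ _) (map _ _ == b) => S M.
  by rewrite -!andbA; congr andb; exact: andbCA.
rewrite -big_distrr sum_letters; last by rewrite /letter; case: (p); lia.
case lifts_l: lifts_b; rewrite /= ?mul0n ?muln0 //.
have {lifts_l} /eqP b_absZ : map absZ l == b by move: lifts_l => /andP[].
have -> : aseq b (size b) = absZ a_k by rewrite -b_absZ (aseq_map _ _ (erefl 0)) size_map size_l.
by rewrite {1}[a_k]letter_odd_absZ; case: (odd a_k); rewrite /= ?muln0 ?addn0 ?mul1n.
Qed.

Lemma lift_step_lt pi c x s : c < x -> lift_step pi c x s.
Proof. by move=> lt_cx; rewrite /lift_step (ltnW lt_cx) lt_cx !implybT. Qed.

Lemma lift_step_gt pi c x s : x < c -> lift_step pi c x s = false.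
Proof. by move=> lt_xc; rewrite /lift_step leqNgt lt_xc. Qed.

Lemma lift_step_eq pi x s :
  lift_step pi x x s = ((pi s < pi s.+1)%R ==> ~~ odd x) && ((pi s.+1 < pi s)%R ==> odd x).
Proof. by rewrite /lift_step leqnn ltnn eqxx. Qed.

Definition peak (pi : int -> int) (s : nat) : bool :=
  [&& 0 < s, (pi s.-1 < pi s)%R & (pi s.+1 < pi s)%R].

Definition step_weight (pi : int -> int) (b : seq nat) (s : nat) : nat :=
  (aseq b s <= aseq b s.+1) * 2 ^ (aseq b s < aseq b s.+1) *
  (peak pi s ==> (aseq b s.-1 < aseq b s) || (aseq b s < aseq b s.+1)) *
  ((s == 0) ==> (pi 1 < 0)%R ==> (aseq b s < aseq b s.+1)).

Definition lift_weight (pi : int -> int) (b : seq nat) : nat :=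
  \prod_(0 <= s < size b) step_weight pi b s.

Definition minus_end (pi : int -> int) (b : seq nat) : bool :=
  [&& 0 < size b, 0 < aseq b (size b) &
      (aseq b (size b).-1 < aseq b (size b)) || (pi (size b) < pi (size b).-1)%R].

Section RconsWeights.
Variables (pi : int -> int) (b : seq nat) (y : nat).
Let k := size b.
Let c := aseq b k.

Lemma lift_weight_rcons : lift_weight pi (rcons b y) =
  lift_weight pi b * ((c <= y) * 2 ^ (c < y) * (peak pi k ==> (aseq b k.-1 < c) || (c < y)) *
                      ((k == 0) ==> (pi 1 < 0)%R ==> (c < y))).
Proof.
rewrite /lift_weight size_rcons big_nat_recr //= /step_weight aseq_rcons_last.
rewrite !aseq_rcons ?leq_pred //; congr (_ * _); apply: eq_big_nat => s /andP[_ lt_sk].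
by rewrite !aseq_rcons // ?(ltnW lt_sk) // (leq_trans (leq_pred s) (ltnW lt_sk)).
Qed.

Lemma minus_end_rcons :
  minus_end pi (rcons b y) = (0 < y) && ((c < y) || (pi k.+1 < pi k)%R).
Proof. by rewrite /minus_end size_rcons aseq_rcons_last /= aseq_rcons. Qed.

End RconsWeights.

Section LiftInvariant.
Variables (pi : int -> int) (n K : nat).
Hypothesis pi_inj : {in [pred i | i <= n] &, injective (fun i : nat => pi i)}.
Hypothesis pi0 : pi 0 = 0%R.

Lemma pi_descentE s : s < n -> (pi s.+1 < pi s)%R = ~~ (pi s < pi s.+1)%R.
Proof.
move=> lt_sn; rewrite -leNgt le_eqVlt orb_idl // => /eqP eq_pi.
by have := pi_inj lt_sn (ltnW lt_sn) eq_pi; lia.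
Qed.

Lemma pi_prev_descentE s : 0 < s -> s <= n -> (pi s < pi s.-1)%R = ~~ (pi s.-1 < pi s)%R.
Proof. by move=> s_gt0 le_sn; rewrite -{1}(prednK s_gt0) pi_descentE ?prednK. Qed.

(* The last clause strengthens the induction on plateaus of value 0: once pi
   descends on such a plateau, no lift survives. *)
Definition lift_inv (b : seq nat) : Prop :=
  [/\ nlifts pi K b true = minus_end pi b * nlifts pi K b false,
      nlifts pi K b false + nlifts pi K b true = lift_weight pi b &
      [&& aseq b (size b) == 0, 0 < size b & (pi (size b) < pi (size b).-1)%R] ->
        nlifts pi K b false = 0].

Lemma lift_inv_nil : lift_inv [::].
Proof. by split; rewrite /nlifts /lift_weight /= !big_cons !big_nil. Qed.

Section Step.
Variables (b : seq nat) (y : nat).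
Hypotheses (lt_bn : size b < n) (lt_yK : y.*2 < K) (inv_b : lift_inv b).
Let k := size b.
Let c := aseq b k.
Let U := nlifts pi K b false.
Let D := nlifts pi K b true.

Lemma lift_inv_up : c < y -> lift_inv (rcons b y).
Proof.
move=> lt_cy; have y_gt0 : 0 < y by apply: leq_ltn_trans lt_cy.
have [_ weight_b _] := inv_b.
rewrite /lift_inv !nlifts_rcons // lift_weight_rcons minus_end_rcons size_rcons aseq_rcons_last.
rewrite -/k -/c -/U -/D -weight_b !lift_step_lt /letter; try lia.
rewrite y_gt0 lt_cy (ltnW lt_cy) orbT implybT /=.
by split=> [| | /andP[/eqP y0]]; lia.
Qed.

Lemma lift_inv_down : y < c -> lift_inv (rcons b y).
Proof.
move=> lt_yc; rewrite /lift_inv !nlifts_rcons // lift_weight_rcons minus_end_rcons.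
rewrite -/k -/c !lift_step_gt /letter; try lia.
by rewrite (leqNgt c y) lt_yc /= !muln0.
Qed.

Lemma lift_inv_flat0 : c = 0 -> y = 0 -> lift_inv (rcons b y).
Proof.
move=> c0 y0; have [minus_b weight_b zero_b] := inv_b.
have D0 : D = 0 by rewrite /D minus_b /minus_end -/k -/c c0 andbF.
rewrite /lift_inv !nlifts_rcons // lift_weight_rcons minus_end_rcons size_rcons aseq_rcons_last.
rewrite -/k -/c -weight_b -/U -/D D0 c0 y0 /letter /= lift_step_eq /= !implybT !implybF.
rewrite !mul0n !mul1n !addn0.
split=> // [|desc_k]; last by rewrite desc_k muln0.
have [k0 | k_gt0] := posnP k; first by rewrite /peak k0 pi0; case: (pi 1 < 0)%R.
rewrite /= muln1.
case: (boolP (pi k.+1 < pi k)%R) => [desc_k | asc_k]; last by rewrite /peak (negPf asc_k) !andbF.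
case: (boolP (pi k.-1 < pi k)%R) => [asc_km1 | desc_km1].
  by rewrite /peak k_gt0 asc_km1 desc_k.
have U0 : U = 0.
  by apply: zero_b; rewrite -/k -/c c0 eqxx k_gt0 pi_prev_descentE // ltnW.
by rewrite U0.
Qed.

Lemma lift_inv_flat : 0 < c -> y = c -> lift_inv (rcons b y).
Proof.
move=> c_gt0 y_c; have [minus_b weight_b _] := inv_b.
have k_gt0 : 0 < k by move: c_gt0; rewrite /c; case: (k).
have odd_c2 : odd c.*2.-1 by rewrite -(prednK c_gt0) doubleS /= odd_double.
rewrite /lift_inv !nlifts_rcons // lift_weight_rcons minus_end_rcons size_rcons aseq_rcons_last.
rewrite -/k -/c -weight_b -/U -/D y_c /letter /= !lift_step_eq odd_double odd_c2.
rewrite (@lift_step_lt _ c.*2.-1 c.*2) ?(@lift_step_gt _ c.*2 c.*2.-1); try lia.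
rewrite c_gt0 leqnn ltnn (gtn_eqF k_gt0) (gtn_eqF c_gt0) /= !orbF !implybT !implybF.
rewrite !mul1n !muln0 !muln1 add0n !andbT pi_descentE //.
case: (boolP (pi k < pi k.+1)%R) => [asc_k | desc_k] /=.
  by rewrite /peak pi_descentE // asc_k !andbF; split; rewrite ?muln0 ?muln1 ?addn0.
rewrite !muln0 !muln1 mul1n add0n; split=> //.
rewrite /peak k_gt0 (pi_descentE lt_bn) desc_k andbT /=.
move: minus_b; rewrite /minus_end -/k -/c -/U -/D k_gt0 c_gt0 /=.
have [_ | _] := ltnP (aseq b k.-1) c; first by rewrite implybT muln1 mul1n => ->.
rewrite pi_prev_descentE ?(ltnW lt_bn) //.
by case: (pi k.-1 < pi k)%R => /= ->; rewrite ?mul0n ?muln0 ?mul1n ?muln1.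
Qed.

End Step.

Lemma lift_invariant b : size b <= n -> all (fun y => y.*2 < K) b -> lift_inv b.
Proof.
elim/last_ind: b => [|b y IHb]; first by move=> _ _; exact: lift_inv_nil.
rewrite size_rcons all_rcons => lt_bn /andP[lt_yK /(IHb (ltnW lt_bn)) inv_b].
case: (ltngtP (aseq b (size b)) y) => [lt_cy | lt_yc | eq_cy].
- exact: lift_inv_up.
- exact: lift_inv_down.
have [c0 | c_gt0] := posnP (aseq b (size b)); last exact: lift_inv_flat.
by apply: lift_inv_flat0 => //; rewrite -eq_cy.
Qed.

Lemma nlifts_weight b : size b <= n -> all (fun y => y.*2 < K) b ->
  nlifts pi K b false + nlifts pi K b true = lift_weight pi b.
Proof. by move=> le_bn b_K; have [] := lift_invariant le_bn b_K. Qed.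

End LiftInvariant.

(** * The weight in closed form *)

Lemma path_leq0E n b : size b = n ->
  path leq 0 b = [forall i : 'I_n, aseq b i <= aseq b i.+1].
Proof.
move=> <-; apply/(pathP 0)/forallP => [le_b i | le_b i lt_ib].
  by case: i => -[|i] lt_ib; exact: (le_b _ lt_ib).
by have := le_b (Ordinal lt_ib); case: i lt_ib.
Qed.

Lemma card_ascent_set n b : #|ascent_set n b| = \sum_(i < n) (aseq b i < aseq b i.+1).
Proof. by rewrite -sum1_card big_mkcond; apply: eq_bigr => i _; rewrite inE; case: ltnP. Qed.

Lemma peaks_covered n pi b :
  [forall i : 'I_n, peak pi i ==> (aseq b i.-1 < aseq b i) || (aseq b i < aseq b i.+1)] =
  [forall i : 'I_n, PeB n pi i ==>
     (i \in ascent_set n b) || [exists e in ascent_set n b, (val e).+1 == val i]].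
Proof.
apply: eq_forallb => i; rewrite /PeB /peak ltn_ord inE orbC.
case: (posnP i) => //= i_gt0; congr (_ ==> (_ || _)).
have lt_i1n : i.-1 < n by rewrite (leq_ltn_trans (leq_pred i)).
apply/idP/existsP => [asc_i1 | [e /andP[]]]; last by rewrite inE => + /eqP <-.
exists (Ordinal lt_i1n); rewrite inE /= prednK // eqxx andbT.
by move: asc_i1; case: (nat_of_ord i) i_gt0.
Qed.

Lemma start_covered n (pi : int -> int) b :
  [forall i : 'I_n, (i == 0 :> nat) ==> (pi 1 < 0)%R ==> (aseq b i < aseq b i.+1)] =
  ((0 < n) && (pi 1 < 0)%R) ==> [exists e in ascent_set n b, val e == 0].
Proof.
case: (posnP n) => [n0 | n_gt0] /=; first by apply/forallP => -[i]; rewrite n0.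
apply/forallP/implyP => [start_b desc0 | cover0 i].
  apply/existsP; exists (Ordinal n_gt0); move: (start_b (Ordinal n_gt0)).
  by rewrite inE /= desc0 /= andbT.
case: eqP => //= i0; apply/implyP => /cover0 /existsP[e].
by rewrite inE => /andP[+ /eqP e0]; rewrite (_ : e = i) //; apply: val_inj; rewrite /= e0 i0.
Qed.

Lemma lift_weight_closed n pi b : size b = n ->
  lift_weight pi b = path leq 0 b * 2 ^ #|ascent_set n b| * admissible pi (ascent_set n b).
Proof.
move=> size_b; rewrite /lift_weight size_b big_mkord /step_weight !big_split /=.
rewrite !prod_nat_bool -path_leq0E // card_ascent_set expn_sum peaks_covered start_covered.
by rewrite /admissible -mulnA mulnb.
Qed.

Lemma nlifts_parity_sum pi K b : nlifts pi K b false + nlifts pi K b true =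
  \sum_(a <- bounded_seqs (size b) K) (lift_ok pi (size b) a && (map absZ a == b)).
Proof.
by rewrite -big_split; apply: eq_bigr => a _; case: (odd _); rewrite /= ?andbT ?andbF ?addn0.
Qed.

Lemma dB_as_sum n pi mu : dB n pi mu =
  \sum_(b <- bounded_seqs n (mono_bound mu))
    (nlifts pi (2 * mono_bound mu) b false + nlifts pi (2 * mono_bound mu) b true) * perm_eq b mu.
Proof.
set B := mono_bound mu; set K := 2 * B.
rewrite /dB -/B -/K (eq_card (B := [pred a : n.-tuple 'I_K |
  [pred l | lift_ok pi n l && perm_eq (map absZ l) mu] [seq val c | c <- a]])); last first.
  by move=> a; rewrite !inE dB_okE -map_comp.
rewrite card_tuple_bounded_seqs count_sum.
under [RHS]eq_big_seq => b.
  rewrite mem_bounded_seqs => /andP[/eqP size_b _].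
  rewrite nlifts_parity_sum size_b big_distrl /=.
  over.
rewrite exchange_big /=; apply: eq_big_seq => a; rewrite mem_bounded_seqs => /andP[/eqP size_a _].
rewrite (eq_bigr (fun b => (b == map absZ a) * (lift_ok pi n a * perm_eq b mu))); last first.
  by move=> b _; rewrite eq_sym -mulnb mulnCA mulnA.
rewrite sum_pick ?uniq_bounded_seqs //.
case perm_a: (perm_eq _ mu); rewrite ?muln0 ?andbF //= andbT muln1.
suff -> : map absZ a \in bounded_seqs n B by rewrite mul1n.
rewrite mem_bounded_seqs size_map size_a eqxx /=.
by apply/allP => x; rewrite (perm_mem perm_a); exact: mono_bound_gt.
Qed.

Section SignedPerm.
Variables (n : nat) (pi : int -> int).
Hypothesis pi_signed : signed_perm n pi.

Let in_range (i : nat) : i <= n -> (- (n%:Z) <= i%:Z <= n%:Z)%R.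
Proof. by move=> le_in; apply/andP; split; lia. Qed.

Lemma signed_perm_nat_inj : {in [pred i | i <= n] &, injective (fun i : nat => pi i)}.
Proof.
case: pi_signed => _ pi_inj _ i j le_in le_jn eq_ij.
by have [] := pi_inj _ _ (in_range le_in) (in_range le_jn) eq_ij.
Qed.

Lemma signed_perm0 : pi 0 = 0%R.
Proof.
case: pi_signed => _ _ pi_odd.
have pi_odd0 : pi 0 = (- pi 0)%R := pi_odd 0 (in_range (leq0n n)).
lia.
Qed.

End SignedPerm.

Unset Implicit Arguments.

Theorem theorem6p3 (n : nat) (pi : int -> int) :
  signed_perm n pi -> forall mu : seq nat, dB n pi mu = rhs n pi mu.
Proof.
move=> pi_signed mu; rewrite dB_as_sum rhs_as_sum; apply: eq_big_seq => b.
rewrite mem_bounded_seqs => /andP[/eqP size_b b_bounded].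
rewrite (nlifts_weight (signed_perm_nat_inj pi_signed) (signed_perm0 pi_signed)) ?size_b //.
  by rewrite (lift_weight_closed pi size_b).
by apply/allP => y /(allP b_bounded); rewrite -!muln2; lia.
Qed.
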